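(* Let $\phi$ be a uniformly convex N-function. Then the map $(\delta^-,\delta^+,t)\mapsto\phi'_{(\delta^-,\delta^+)}(t)$ is continuous on $[0,1]\times[1,\infty]\times[0,\infty)$. Furthermore, the map $(\delta^-,\delta^+,Q)\mapsto A_{(\delta^-,\delta^+)}(Q)$ is continuous on $[0,1]\times[1,\infty]\times\mathbb{R}^{n\times n}$, and the same holds with $A_{(\delta^-,\delta^+)}$ replaced by $A^{-1}_{(\delta^-,\delta^+)}$, $V_{(\delta^-,\delta^+)}$ or $V^{-1}_{(\delta^-,\delta^+)}$.
   Context: An N-function is a function $\phi:[0,\infty)\to[0,\infty)$ with right-continuous non-decreasing derivative $\phi'$, $\phi'(0)=0$, $\phi'(t)>0$ for $t>0$, $\phi'(t)\to\infty$, $\phi(t)=\int_0^t\phi'$. It is uniformly convex if $\phi\in C^1([0,\infty))\cap C^2((0,\infty))$ and $\inf_{t>0}\frac{\phi''(t)t}{\phi'(t)}+1>1$, $\sup_{t>0}\frac{\phi''(t)t}{\phi'(t)}+1<\infty$. For $0\le\delta^-\le\delta^+\le\infty$ the truncation is given by $\phi'_{(\delta^-,\delta^+)}(t):=\frac{\phi'(m)}{m}\,t$ with $m=\max(\delta^-,\min(t,\delta^+))$ (and value $0$ when $t=0$); $[1,\infty]$ carries the topology of the extended half-line. For $Q\in\mathbb{R}^{n\times n}$, $A_{(\delta^-,\delta^+)}(Q):=\phi'_{(\delta^-,\delta^+)}(|Q|)\frac{Q}{|Q|}$ and $V_{(\delta^-,\delta^+)}(Q):=\sqrt{\phi'_{(\delta^-,\delta^+)}(|Q|)|Q|}\,\frac{Q}{|Q|}$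 (both $0$ at $Q=0$), $|\cdot|$ the Frobenius norm; $A^{-1}_{(\delta^-,\delta^+)}$ and $V^{-1}_{(\delta^-,\delta^+)}$ denote the inverse maps of these bijections of $\mathbb{R}^{n\times n}$. *)

From HB Require Import structures.
From mathcomp Require Import all_boot all_order all_algebra.
From mathcomp Require Import all_classical all_reals all_analysis.
Set Implicit Arguments. Unset Strict Implicit. Unset Printing Implicit Defensive.
Import Order.TTheory GRing.Theory Num.Theory.
Import numFieldNormedType.Exports.
Local Open Scope classical_set_scope.
Local Open Scope ring_scope.

Definition Nfunction (R : realType) (phi dphi : R -> R) : Prop :=
  [/\ (forall s t, 0 <= s -> s <= t -> dphi s <= dphi t),
      (forall t, 0 <= t -> (dphi x @[x --> t^'+] --> dphi t)),
      dphi 0 = 0 /\ (forall t, 0 < t -> 0 < dphi t),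
      (dphi x @[x --> +oo] --> +oo)
    & (forall t, 0 <= t ->
         (phi t)%:E = (\int[lebesgue_measure]_(x in `[0%R, t]) (dphi x)%:E)%E)].

Definition unif_convex_Nfunction (R : realType) (phi dphi : R -> R) : Prop :=
  [/\ Nfunction phi dphi,
      {within `[0, +oo[, continuous dphi},
      (forall t, 0 < t -> derivable dphi t 1) /\
      {within `]0, +oo[, continuous (derive1 dphi)},
      (exists p0 : R, 1 < p0 /\
         forall t, 0 < t -> p0 <= derive1 dphi t * t / dphi t + 1)
    & (exists q0 : R,
         forall t, 0 < t -> derive1 dphi t * t / dphi t + 1 <= q0)].

Definition trunc_m (R : realType) (dm : R) (dp : \bar R) (t : R) : R :=
  Num.max dm (match dp with EFin r => Num.min t r | _ => t end).

Definition dphi_trunc (R : realType) (dphi : R -> R) (dm : R) (dp : \bar R)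
  (t : R) : R :=
  if t == 0 then 0
  else dphi (trunc_m dm dp t) / trunc_m dm dp t * t.

Definition frob (R : realType) (n : nat) (Q : 'M[R]_n) : R :=
  Num.sqrt (\sum_(i < n) \sum_(j < n) Q i j ^+ 2).

Definition A_trunc (R : realType) (n : nat) (dphi : R -> R) (dm : R)
  (dp : \bar R) (Q : 'M[R]_n) : 'M[R]_n :=
  if Q == 0 then 0 else (dphi_trunc dphi dm dp (frob Q) / frob Q) *: Q.

Definition V_trunc (R : realType) (n : nat) (dphi : R -> R) (dm : R)
  (dp : \bar R) (Q : 'M[R]_n) : 'M[R]_n :=
  if Q == 0 then 0
  else (Num.sqrt (dphi_trunc dphi dm dp (frob Q) * frob Q) / frob Q) *: Q.

Definition param_dom (R : realType) : set (R * \bar R) :=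
  [set d | 0 <= d.1 <= 1 /\ (1%:E <= d.2)%E].

(* Each of A, V and their inverses is a radial map Q |-> w d |Q| * Q / |Q| whose
   profile w d is, for every parameter d in [0,1] x [1,oo], an increasing
   homeomorphism of [0,oo), jointly continuous in (d, t): w d t = phi'_d(t) for A
   and w d t = sqrt(phi'_d(t) t) for V.  A radial map is as continuous as its
   profile, and it is inverted by the radial map of the inverse profile, which is
   again jointly continuous by strict monotonicity.
   Writing phi'_d(t) = phi'(m) t / m with m = max(d^-, min(t, d^+)), continuity for
   t > 0 is clear since then m > 0; at t = 0 the level m may collapse to 0, and
   continuity follows from phi'_d(t) <= phi'(sqrt t) + phi'(1) sqrt t for t <= 1.
   Strict monotonicity in t holds because m and t / m are nondecreasing in t and
   phi' is strictly increasing. *)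

From HB Require Import structures.
From mathcomp Require Import all_boot all_order all_algebra.
From mathcomp Require Import all_classical all_reals all_analysis.
From mathcomp Require Import lra.
Set Implicit Arguments. Unset Strict Implicit. Unset Printing Implicit Defensive.
Import Order.TTheory GRing.Theory Num.Theory.
Import numFieldNormedType.Exports.
Local Open Scope classical_set_scope.
Local Open Scope ring_scope.

Section Frobenius.
Context {R : realType} {n : nat}.
Implicit Type Q : 'M[R]_n.

Lemma frob_ge0 Q : 0 <= frob Q.
Proof. exact: sqrtr_ge0. Qed.

Lemma frob_entry Q i j : `|Q i j| <= frob Q.
Proof.
have sqr_sums_ge0 (P : pred 'I_n) (F : 'I_n -> 'I_n -> R) :
    0 <= \sum_(k | P k) \sum_l F k l ^+ 2.
  by apply: sumr_ge0 => k _; apply: sumr_ge0 => l _; exact: sqr_ge0.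
rewrite /frob -sqrtr_sqr ler_sqrt ?sqr_sums_ge0 //.
rewrite (bigD1 i) //= (bigD1 j) //= -addrA lerDl addr_ge0 ?sqr_sums_ge0 //.
by apply: sumr_ge0 => l _; exact: sqr_ge0.
Qed.

Lemma frob_eq0 Q : (frob Q == 0) = (Q == 0).
Proof.
apply/eqP/eqP => [Q0|->].
  apply/matrixP => i j; rewrite mxE; apply/normr0_eq0/eqP.
  by rewrite eq_le normr_ge0 -Q0 frob_entry.
by rewrite /frob big1 ?sqrtr0 // => i _; rewrite big1 // => j _; rewrite mxE expr0n.
Qed.

Lemma frob0 : frob (0 : 'M[R]_n) = 0.
Proof. by apply/eqP; rewrite frob_eq0. Qed.

Lemma frob_gt0 Q : Q != 0 -> 0 < frob Q.
Proof. by rewrite lt_def frob_ge0 frob_eq0 => ->. Qed.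

Lemma frobZ (c : R) Q : frob (c *: Q) = `|c| * frob Q.
Proof.
rewrite /frob -sqrtr_sqr -sqrtrM ?sqr_ge0 // mulr_sumr; congr Num.sqrt.
by apply: eq_bigr => i _; rewrite mulr_sumr; apply: eq_bigr => j _; rewrite mxE exprMn.
Qed.

Lemma mx_norm_le_frob Q : `|Q| <= frob Q.
Proof.
rewrite [leLHS]/Num.norm /= mx_normrE; apply/bigmax_leP.
by split=> [|[i j] _]; [exact: frob_ge0 | exact: frob_entry].
Qed.

Lemma frob_continuous : continuous (@frob R n).
Proof.
move=> Q; apply: continuous_comp; last exact: sqrt_continuous.
apply: (continuous_big add_continuous) => i _.
apply: (continuous_big add_continuous) => j _ M.
exact: cvgM (@coord_continuous R n n i j M) (@coord_continuous R n n i j M).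
Qed.

End Frobenius.

Lemma cvg_within_comp (T U V : topologicalType) (A : set T) (B : set U)
    (g : T -> U) (h : U -> V) (x : T) :
  {for x, continuous g} -> (forall y, A y -> B (g y)) ->
  h @ within B (nbhs (g x)) --> h (g x) ->
  h (g y) @[y --> within A (nbhs x)] --> h (g x).
Proof.
move=> gx gAB; apply: (@cvg_comp _ _ _ g h _ (within B (nbhs (g x)))).
move=> S BS; apply: (@filterS _ (nbhs x) _ _ _ _ (gx _ BS)) => y Sy Ay.
exact: Sy (gAB _ Ay).
Qed.

Section Radial.
Context {R : realType} {n : nat}.

Definition radial (T : Type) (w : T -> R -> R) (d : T) (Q : 'M[R]_n) : 'M[R]_n :=
  if Q == 0 then 0 else (w d (frob Q) / frob Q) *: Q.

Lemma radial_norm_le (T : Type) (w : T -> R -> R) d Q :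
  `|radial w d Q| <= `|w d (frob Q)|.
Proof.
rewrite /radial; have [_|Q0] := eqVneq Q 0; first by rewrite normr0.
rewrite normrZ normrM normfV (ger0_norm (frob_ge0 Q)) -mulrA ler_piMr //.
by rewrite ler_pdivrMl ?frob_gt0 // mulr1 mx_norm_le_frob.
Qed.

Lemma radial_cancel (T : Type) (w v : T -> R -> R) d :
  (forall t, 0 <= t -> v d (w d t) = t) -> (forall t, 0 < t -> 0 < w d t) ->
  cancel (radial w d) (radial v d).
Proof.
move=> vK w_gt0 Q; rewrite /radial; have [->|Q0] := eqVneq Q 0; first by rewrite eqxx.
have fQ := frob_gt0 Q0; have c0 : 0 < w d (frob Q) / frob Q by rewrite divr_gt0 ?w_gt0.
rewrite scaler_eq0 (negbTE Q0) gt_eqF //= frobZ (gtr0_norm c0) mulfVK ?gt_eqF //.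
rewrite vK ?ltW // scalerA mulrA divfK ?gt_eqF ?w_gt0 // divff ?gt_eqF //.
by rewrite scale1r.
Qed.

Lemma radial_continuous (T : topologicalType) (P : set T) (w : T -> R -> R) :
  {within [set x : T * R | P x.1 /\ 0 <= x.2], continuous (fun x => w x.1 x.2)} ->
  (forall d, P d -> w d 0 = 0) ->
  {within [set x : T * 'M[R]_n | P x.1], continuous (fun x => radial w x.1 x.2)}.
Proof.
move=> wc w0; apply/subspace_continuousP => -[d0 Q0] /= Pd0.
set A := [set x : T * 'M[R]_n | P x.1].
have frob2_cvg : frob x.2 @[x --> nbhs (d0, Q0)] --> frob Q0.
  by apply: continuous_comp; [exact: cvg_snd | exact: frob_continuous].
have w_cvg : w x.1 (frob x.2) @[x --> within A (nbhs (d0, Q0))] --> w d0 (frob Q0).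
  apply: (@cvg_within_comp _ _ _ _ [set x : T * R | P x.1 /\ 0 <= x.2]
    (fun x => (x.1, frob x.2)) (fun y => w y.1 y.2)).
  - exact: cvg_pair cvg_fst frob2_cvg.
  - by move=> y Ay; split => //; exact: frob_ge0.
  - by move/subspace_continuousP : wc; apply; split => //; exact: frob_ge0.
rewrite /from_subspace /=; have [Q00|Q0n] := eqVneq Q0 0.
  have -> : radial w d0 Q0 = 0 by rewrite /radial Q00 eqxx.
  apply/cvgr0Pnorm_lt => e e0.
  move: w_cvg; rewrite Q00 frob0 w0 // => /cvgr0Pnorm_lt /(_ e e0).
  apply: filterS => -[d Q] /=.
  exact: le_lt_trans (radial_norm_le w d Q).
have Qn : \forall x \near within A (nbhs (d0, Q0)), x.2 != 0.
  apply: cvg_within; move/cvgrPdist_lt: frob2_cvg => /(_ _ (frob_gt0 Q0n)).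
  apply: filterS => -[d Q] /=; apply: contraTneq => ->.
  by rewrite frob0 subr0 ger0_norm ?frob_ge0 ?ltxx.
have radialE : {near within A (nbhs (d0, Q0)),
    (fun x => (w x.1 (frob x.2) / frob x.2) *: x.2) =1 (fun x => radial w x.1 x.2)}.
  by apply: filterS Qn => -[d Q] /= /negbTE; rewrite /radial => ->.
apply: cvg_trans (near_eq_cvg radialE) _; rewrite /radial (negbTE Q0n).
apply: cvgZ; last exact: cvg_within_filter cvg_snd.
apply: cvgM w_cvg _; apply: cvgV; first by rewrite frob_eq0.
exact: cvg_within_filter frob2_cvg.
Qed.

End Radial.

Definition incr_homeo_family (R : realType) (T : topologicalType) (P : set T)
    (w : T -> R -> R) : Prop :=
  [/\ {within [set x : T * R | P x.1 /\ 0 <= x.2], continuous (fun x => w x.1 x.2)},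
      forall d, P d -> w d 0 = 0,
      forall d, P d -> forall s t, 0 <= s -> s < t -> w d s < w d t
    & forall d, P d -> forall M, exists t, 0 <= t /\ M <= w d t].

Section HomeoInverse.
Context {R : realType} {T : topologicalType} (P : set T) (w : T -> R -> R).
Hypothesis wH : incr_homeo_family P w.

Let D := [set x : T * R | P x.1 /\ 0 <= x.2].

Let w_cont : {within D, continuous (fun x => w x.1 x.2)}.
Proof. by case: wH. Qed.

Let w0 d : P d -> w d 0 = 0.
Proof. by case: wH => _ w0 _ _; exact: w0. Qed.

Let w_incr d : P d -> forall s t, 0 <= s -> s < t -> w d s < w d t.
Proof. by case: wH => _ _ w_incr _; exact: w_incr. Qed.

Let w_unbounded d : P d -> forall M, exists t, 0 <= t /\ M <= w d t.
Proof. by case: wH => _ _ _ w_unbounded; exact: w_unbounded. Qed.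

Definition homeo_inv (d : T) (s : R) : R := xget 0 [set r | 0 <= r /\ w d r = s].

Let w_ler d s t : P d -> 0 <= s -> 0 <= t -> (w d s <= w d t) = (s <= t).
Proof.
move=> Pd s0 t0; apply/idP/idP => [|]; last first.
  by rewrite le_eqVlt => /predU1P[->//|/(w_incr Pd s0)/ltW].
by apply: contraTT; rewrite -!ltNge; exact: w_incr.
Qed.

Let w_ge0 d t : P d -> 0 <= t -> 0 <= w d t.
Proof. by move=> Pd t0; rewrite -(w0 Pd) w_ler. Qed.

Let w_gt0 d t : P d -> 0 < t -> 0 < w d t.
Proof. by move=> Pd t0; rewrite -(w0 Pd) w_incr. Qed.

Let w_section_cvg d (t : R) : P d -> 0 <= t ->
  w d r @[r --> within [set r | 0 <= r] (nbhs t)] --> w d t.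
Proof.
move=> Pd t0; apply: (@cvg_within_comp _ _ _ _ D (fun r => (d, r)) (fun x => w x.1 x.2)).
- exact: cvg_pair (cvg_cst _) cvg_id.
- by move=> r r0; split.
- by move/subspace_continuousP : w_cont; apply; split.
Qed.

Lemma homeo_inv_spec d s : P d -> 0 <= s -> 0 <= homeo_inv d s /\ w d (homeo_inv d s) = s.
Proof.
move=> Pd s0; apply: (@xgetPex _ 0 [set r | 0 <= r /\ w d r = s]).
have [t [t0 st]] := w_unbounded Pd s.
have w_cont_0t : {within `[0, t], continuous (w d)}.
  apply/subspace_continuousP => r; rewrite /= in_itv /= => /andP[r0 _].
  apply: cvg_trans (w_section_cvg Pd r0); apply: cvg_app; apply: within_subset.
  by move=> u; rewrite /= in_itv /= => /andP[].
have [|r] := IVT (v := s) t0 w_cont_0t; first by rewrite w0 // ge_min s0 le_max st orbT.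
by rewrite in_itv /= => /andP[r0 _] wr; exists r.
Qed.

Lemma homeo_invK d t : P d -> 0 <= t -> homeo_inv d (w d t) = t.
Proof.
move=> Pd t0; have [r0 wr] := homeo_inv_spec Pd (w_ge0 Pd t0).
by apply/eqP; rewrite eq_le -(w_ler Pd r0 t0) -(w_ler Pd t0 r0) wr lexx.
Qed.

Lemma homeo_inv0 d : P d -> homeo_inv d 0 = 0.
Proof. by move=> Pd; rewrite -{1}(w0 Pd) homeo_invK. Qed.

Lemma homeo_inv_gt0 d s : P d -> 0 < s -> 0 < homeo_inv d s.
Proof.
move=> Pd s0; have [r0 wr] := homeo_inv_spec Pd (ltW s0).
by rewrite lt_def r0 andbT; apply: contraTneq s0 => r_eq0; rewrite -wr r_eq0 w0 ?ltxx.
Qed.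

Let w_sub_cvg d0 (s0 u : R) : P d0 -> 0 <= s0 -> 0 <= u ->
  w x.1 u - x.2 @[x --> within D (nbhs (d0, s0))] --> w d0 u - s0.
Proof.
move=> Pd0 s00 u0; apply: cvgB; last exact: cvg_within_filter cvg_snd.
apply: (@cvg_within_comp _ _ _ _ D (fun x => (x.1, u)) (fun x => w x.1 x.2)).
- exact: cvg_pair cvg_fst (cvg_cst _).
- by move=> x [].
- by move/subspace_continuousP : w_cont; apply; split.
Qed.

Lemma homeo_inv_continuous : {within D, continuous (fun x => homeo_inv x.1 x.2)}.
Proof.
apply/subspace_continuousP => -[d0 s0] /= [Pd0 s00]; rewrite /from_subspace /=.
have [r0_ge0 wr0] := homeo_inv_spec Pd0 s00; set r0 := homeo_inv d0 s0 in r0_ge0 wr0 *.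
apply/cvgrPdist_lt => e e0.
have inD : \forall x \near within D (nbhs (d0, s0)), D x by exact: withinT.
have above : \forall x \near within D (nbhs (d0, s0)), homeo_inv x.1 x.2 < r0 + e.
  have r0e_ge0 : 0 <= r0 + e by rewrite addr_ge0 // ltW.
  have : 0 < w d0 (r0 + e) - s0 by rewrite subr_gt0 -[ltLHS]wr0 w_incr // ltrDl.
  move/(cvgr_gt _ (w_sub_cvg Pd0 s00 r0e_ge0)); apply: filterS2 inD => -[d s] [/= Pd s_ge0].
  have [r_ge0 wr] := homeo_inv_spec Pd s_ge0.
  by rewrite subr_gt0 -{1}wr ltNge (w_ler Pd) // -ltNge.
have below : \forall x \near within D (nbhs (d0, s0)), r0 - e < homeo_inv x.1 x.2.
  have [r0e|er0] := ltP r0 e.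
    apply: filterS inD => -[d s] [/= Pd s_ge0]; have [r_ge0 _] := homeo_inv_spec Pd s_ge0.
    by apply: lt_le_trans r_ge0; rewrite subr_lt0.
  have r0e_ge0 : 0 <= r0 - e by rewrite subr_ge0.
  have : w d0 (r0 - e) - s0 < 0 by rewrite subr_lt0 -[ltRHS]wr0 w_incr // gtrDl oppr_lt0.
  move/(cvgr_lt _ (w_sub_cvg Pd0 s00 r0e_ge0)); apply: filterS2 inD => -[d s] [/= Pd s_ge0].
  have [r_ge0 wr] := homeo_inv_spec Pd s_ge0.
  by rewrite subr_lt0 -{1}wr ltNge (w_ler Pd) // -ltNge.
by apply: filterS2 above below => x up lo; rewrite ltr_distlC lo up.
Qed.

Lemma radial_homeo (n : nat) :
  {within [set x : T * 'M[R]_n | P x.1], continuous (fun x => radial w x.1 x.2)} /\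
  exists winv : T -> 'M[R]_n -> 'M[R]_n,
    (forall d, P d -> cancel (radial w d) (winv d) /\ cancel (winv d) (radial w d)) /\
    {within [set x : T * 'M[R]_n | P x.1], continuous (fun x => winv x.1 x.2)}.
Proof.
split; first exact: radial_continuous.
exists (radial homeo_inv); split; last first.
  exact: radial_continuous homeo_inv_continuous homeo_inv0.
move=> d Pd; split; apply: radial_cancel => t t0.
- exact: homeo_invK.
- exact: w_gt0.
- by have [] := homeo_inv_spec Pd t0.
- exact: homeo_inv_gt0.
Qed.

Lemma sqrt_mul_incr_homeo_family :
  incr_homeo_family P (fun d t => Num.sqrt (w d t * t)).
Proof.
split.
- apply/subspace_continuousP => x Dx; rewrite /from_subspace /=.
  have w_mul_cvg : w y.1 y.2 * y.2 @[y --> within D (nbhs x)] --> w x.1 x.2 * x.2.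
    apply: cvgM; first by move/subspace_continuousP : w_cont; apply.
    exact: cvg_within_filter cvg_snd.
  exact: cvg_comp w_mul_cvg (@sqrt_continuous R _).
- by move=> d Pd; rewrite mulr0 sqrtr0.
- move=> d Pd s t s0 st; have t0 := le_lt_trans s0 st.
  have ws := w_ge0 Pd s0; have wst := w_incr Pd s0 st.
  rewrite ltr_sqrt; first nra.
  by rewrite mulr_gt0 // (le_lt_trans ws).
- move=> d Pd M; have [t [t0 Mt]] := w_unbounded Pd (M ^+ 2).
  pose t1 := Num.max t 1; have t_le : t <= t1 by rewrite le_max lexx.
  have t1_ge1 : 1 <= t1 by rewrite le_max lexx orbT.
  have t1_ge0 := le_trans t0 t_le.
  have wt_le : w d t <= w d t1 by rewrite w_ler.
  have wt1_ge0 := w_ge0 Pd t1_ge0.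
  exists t1; split => //; apply: le_trans (ler_norm M) _.
  rewrite -sqrtr_sqr ler_sqrt ?mulr_ge0 //; nra.
Qed.

End HomeoInverse.

Section UniformlyConvexNfunction.
Context {R : realType} (phi dphi : R -> R).
Hypothesis phiH : unif_convex_Nfunction phi dphi.

Lemma dphi_le s t : 0 <= s -> s <= t -> dphi s <= dphi t.
Proof. by case: phiH => -[dphi_le _ _ _ _] _ _ _ _; exact: dphi_le. Qed.

Lemma dphi0 : dphi 0 = 0.
Proof. by case: phiH => -[_ _ []]. Qed.

Lemma dphi_gt0 t : 0 < t -> 0 < dphi t.
Proof. by case: phiH => -[_ _ [_ dphi_gt0] _ _] _ _ _ _; exact: dphi_gt0. Qed.

Let dphi_derivable t : 0 < t -> derivable dphi t 1.
Proof. by case: phiH => _ _ [dphi_derivable _] _ _; exact: dphi_derivable. Qed.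

Lemma dphi_continuous_at t : 0 < t -> {for t, continuous dphi}.
Proof.
move=> t0; apply/differentiable_continuous; rewrite -derivable1_diffP.
exact: dphi_derivable.
Qed.

(* The lower index bound p0 > 1 makes phi'' > 0 on (0, oo). *)
Lemma dphi_lt s t : 0 <= s -> s < t -> dphi s < dphi t.
Proof.
have derive_gt0 r : 0 < r -> 0 < derive1 dphi r.
  move=> r0; case: phiH => _ _ _ [p0 [p0_gt1 p0_le]] _.
  have : 1 < derive1 dphi r * r / dphi r + 1 := lt_le_trans p0_gt1 (p0_le _ r0).
  by rewrite ltrDr -mulrA pmulr_lgt0 // divr_gt0 ?dphi_gt0.
move=> s0 st; apply: (@gtr0_derive1_incr _ _ 0 t) => //.
- by move=> r; rewrite in_itv /= => /andP[r0 _]; exact: dphi_derivable.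
- by move=> r; rewrite in_itv /= => /andP[r0 _]; exact: derive_gt0.
- case: phiH => _ dphi_cont _ _ _; apply: continuous_subspaceW dphi_cont.
  by move=> u; rewrite /= !in_itv /= => /andP[-> _].
Qed.

Lemma dphi_cvg0 (T : topologicalType) (A : set T) (g : T -> R) x :
  {for x, continuous g} -> g x = 0 -> (forall y, A y -> 0 <= g y) ->
  dphi (g y) @[y --> within A (nbhs x)] --> 0.
Proof.
move=> gx gx0 gA; have -> : 0 = dphi (g x) by rewrite gx0 dphi0.
apply: (@cvg_within_comp _ _ _ A [set` (`[0, +oo[ : interval R)] g dphi x gx).
  by move=> y /gA; rewrite /= in_itv /= andbT.
case: phiH => _ /subspace_continuousP dphi_cont _ _ _; apply: dphi_cont.
by rewrite /= in_itv /= gx0 lexx.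
Qed.

Lemma dphi_unbounded M : exists t, 1 <= t /\ M <= dphi t.
Proof.
case: phiH => -[_ _ _ /cvgryPge /(_ M) [t0 [_ dphi_ge]] _] _ _ _ _.
exists (Num.max 1 (t0 + 1)); rewrite le_max lexx; split=> //.
by apply: dphi_ge; rewrite lt_max ltrDl ltr01 orbT.
Qed.

End UniformlyConvexNfunction.

Section Truncation.
Context {R : realType}.
Implicit Types (dm s t : R) (dp : \bar R).

Lemma trunc_m_le dm dp : {homo trunc_m dm dp : s t / s <= t}.
Proof. by move=> s t st; case: dp => [r||] //=; apply: le_max2 => //; exact: le_min2. Qed.

Lemma trunc_m_gt0 dm dp t : 0 <= dm -> (0 < dp)%E -> 0 < t -> 0 < trunc_m dm dp t.
Proof.
move=> dm0; case: dp => [r||] //=; rewrite ?lte_fin => r0 t0.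
- by rewrite lt_max lt_min t0 r0 orbT.
- by rewrite lt_max t0 orbT.
Qed.

Lemma max_min_ratio_le (a b s t : R) : 0 <= a -> 0 < b -> 0 < s -> s <= t ->
  s * Num.max a (Num.min t b) <= t * Num.max a (Num.min s b).
Proof.
move=> a0 b0 s0 st.
case: (leP s b) => sb; case: (leP t b) => tb; case: (leP a s) => ras; case: (leP a t) => rat;
  case: (leP a b) => rab; rewrite ?max_r ?max_l ?min_l ?min_r //; nra.
Qed.

Lemma trunc_m_ratio_le dm dp s t : 0 <= dm -> (0 < dp)%E -> 0 < s -> s <= t ->
  s * trunc_m dm dp t <= t * trunc_m dm dp s.
Proof.
move=> dm0; case: dp => [r||] //=; rewrite ?lte_fin => r0 s0 st.
  exact: max_min_ratio_le.
(* For [dp = +oo], truncating at [t + 1] is inactive on [[s, t]]. *)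
have := @max_min_ratio_le dm (t + 1) s t dm0 ltac:(lra) s0 st.
by rewrite !min_l //; lra.
Qed.

Lemma trunc_m_small dm dp t : dm <= 1 -> (1 <= dp)%E -> 0 <= t <= 1 ->
  t <= trunc_m dm dp t <= 1.
Proof.
move=> dm1; case: dp => [r||] //=; rewrite /trunc_m ?lee_fin => r1 /andP[t0 t1].
  rewrite min_l; last exact: le_trans t1 r1.
all: by rewrite le_max lexx orbT ge_max dm1 t1.
Qed.

Lemma trunc_mE dm dp t : dp != -oo%E -> trunc_m dm dp t = Num.max dm (fine (mine t%:E dp)).
Proof. by case: dp => [r||] // _; rewrite ?miney -?EFin_min. Qed.

Lemma trunc_m_continuous :
  {within [set x : R * \bar R * R | x.1.2 != -oo%E],
    continuous (fun x => trunc_m x.1.1 x.1.2 x.2)}.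
Proof.
apply/subspace_continuousP => x0 x0_fin; set B := [set x | _].
have truncE : {near within B (nbhs x0),
    (fun x => Num.max x.1.1 (fine (mine x.2%:E x.1.2))) =1 (fun x => trunc_m x.1.1 x.1.2 x.2)}.
  by apply: filterS (withinT B _) => x /trunc_mE ->.
apply: cvg_trans (near_eq_cvg truncE) _; rewrite /from_subspace (trunc_mE _ _ x0_fin).
have mine_fin : mine x0.2%:E x0.1.2 \is a fin_num.
  by case: x0 x0_fin {truncE} => -[? [r||]] ? //= _; rewrite ?miney -?EFin_min.
have min_cvg : fine (mine x.2%:E x.1.2) @[x --> nbhs x0] --> fine (mine x0.2%:E x0.1.2).
  apply: fine_cvg; rewrite fineK //.
  apply: (@cvg_comp _ _ _ (fun x => (x.2%:E, x.1.2)) (fun y => mine y.1 y.2) _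
    (nbhs (x0.2%:E, x0.1.2))); last exact: (@min_continuous _ (\bar R) (x0.2%:E, x0.1.2)).
  have EFin_cvg : x.2%:E @[x --> nbhs x0] --> x0.2%:E.
    by apply: cvg_EFin; [exact: nearW | exact: cvg_snd].
  have dp_cvg : x.1.2 @[x --> nbhs x0] --> x0.1.2 by exact: cvg_comp cvg_fst cvg_snd.
  exact: cvg_pair EFin_cvg dp_cvg.
have dm_cvg : x.1.1 @[x --> nbhs x0] --> x0.1.1 by exact: cvg_comp cvg_fst cvg_fst.
by apply: cvg_within_filter; exact: continuous_max dm_cvg min_cvg.
Qed.

End Truncation.

Lemma mul_div_le_sqrt (R : realType) (g : R -> R) (m t : R) :
  (forall x y, 0 <= x -> x <= y -> g x <= g y) -> 0 <= g 0 ->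
  0 < t -> t <= m -> m <= 1 -> g m / m * t <= g (Num.sqrt t) + g 1 * Num.sqrt t.
Proof.
move=> g_le g0 t0 tm m1; have m0 := lt_le_trans t0 tm.
have sqrt_t0 : 0 < Num.sqrt t by rewrite sqrtr_gt0.
have g_ge0 x : 0 <= x -> 0 <= g x by move=> x0; exact: le_trans g0 (g_le _ _ (lexx 0) x0).
have gm0 := g_ge0 _ (ltW m0).
have tE : t = Num.sqrt t * Num.sqrt t by rewrite -expr2 sqr_sqrtr ?ltW.
rewrite mulrAC -mulrA; set q := t / m.
have qm : q * m = t by rewrite /q divfK ?gt_eqF.
have q0 : 0 < q by rewrite divr_gt0.
have q1 : q <= 1 by rewrite ler_pdivrMr // mul1r.
have [m_le|m_gt] := leP m (Num.sqrt t).
- have := g_le _ _ (ltW m0) m_le; have := g_ge0 1 ler01; nra.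
- have q_le : q <= Num.sqrt t by nra.
  have := g_le _ _ (ltW m0) m1; have := g_ge0 _ (ltW sqrt_t0); nra.
Qed.

Section TruncatedDerivative.
Context {R : realType} (phi dphi : R -> R).
Hypothesis phiH : unif_convex_Nfunction phi dphi.
Implicit Types (dm s t : R) (dp : \bar R).

Lemma dphi_trunc_gt0 dm dp t : 0 <= dm -> (0 < dp)%E -> 0 < t ->
  0 < dphi_trunc dphi dm dp t.
Proof.
move=> dm0 dp0 t0; have m0 := trunc_m_gt0 dm0 dp0 t0.
by rewrite /dphi_trunc gt_eqF // mulr_gt0 // divr_gt0 // (dphi_gt0 phiH).
Qed.

Lemma dphi_trunc_ge0 dm dp t : 0 <= dm -> (0 < dp)%E -> 0 <= t ->
  0 <= dphi_trunc dphi dm dp t.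
Proof.
move=> dm0 dp0; rewrite le_eqVlt => /predU1P[<-|t0]; first by rewrite /dphi_trunc eqxx.
exact/ltW/dphi_trunc_gt0.
Qed.

Lemma dphi_trunc_lt dm dp s t : 0 <= dm -> (0 < dp)%E -> 0 <= s -> s < t ->
  dphi_trunc dphi dm dp s < dphi_trunc dphi dm dp t.
Proof.
move=> dm0 dp0; rewrite le_eqVlt => /predU1P[<- t0|s0 st].
  by rewrite {1}/dphi_trunc eqxx dphi_trunc_gt0.
have t0 := lt_trans s0 st.
have ms0 := trunc_m_gt0 dm0 dp0 s0; have mt0 := trunc_m_gt0 dm0 dp0 t0.
have m_le := trunc_m_le dm dp (ltW st).
have ratio_le := trunc_m_ratio_le dm0 dp0 s0 (ltW st).
have mulE m x : dphi m / m * x = dphi m * (x / m) by rewrite mulrAC -mulrA.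
rewrite /dphi_trunc !gt_eqF // !mulE.
set ms := trunc_m dm dp s in ms0 m_le ratio_le *.
set mt := trunc_m dm dp t in mt0 m_le ratio_le *.
have q_le : s / ms <= t / mt by rewrite ler_pdivrMr // mulrAC ler_pdivlMr.
have qs0 : 0 < s / ms by rewrite divr_gt0.
have dms0 := dphi_gt0 phiH ms0.
have [m_eq|m_lt] := eqVneq ms mt.
  by rewrite -m_eq ltr_pM2l // ltr_pM2r // invr_gt0.
have ms_lt : ms < mt by rewrite lt_neqAle m_lt m_le.
have := dphi_lt phiH (ltW ms0) ms_lt; nra.
Qed.

Lemma dphi_trunc_unbounded dm dp : dm <= 1 -> (1 <= dp)%E ->
  forall M, exists t, 0 <= t /\ M <= dphi_trunc dphi dm dp t.
Proof.
move=> dm1; case: dp => [r||] //; rewrite ?lee_fin => r1 M.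
  have r0 : 0 < r by lra.
  have dr0 := dphi_gt0 phiH r0.
  pose t := Num.max r (M * r / dphi r); have r_le : r <= t by rewrite le_max lexx.
  exists t; split; first by rewrite (le_trans (ltW r0)).
  rewrite /dphi_trunc gt_eqF ?(lt_le_trans r0) // /trunc_m min_r // max_r; last lra.
  by rewrite -ler_pdivrMl ?divr_gt0 // invf_div le_max [_ / _ * M]mulrC mulrA lexx orbT.
have [t [t1 Mt]] := dphi_unbounded phiH M.
exists t; split; first lra.
have t0 : 0 < t by lra.
by rewrite /dphi_trunc gt_eqF // /trunc_m max_r ?divfK ?gt_eqF //; lra.
Qed.

Lemma dphi_trunc_le_sqrt dm dp t : 0 <= dm <= 1 -> (1 <= dp)%E -> 0 <= t <= 1 ->
  dphi_trunc dphi dm dp t <= dphi (Num.sqrt t) + dphi 1 * Num.sqrt t.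
Proof.
move=> /andP[dm0 dm1] dp1 /[dup] t01 /andP[t0 t1].
have [->|t_neq0] := eqVneq t 0.
  by rewrite /dphi_trunc eqxx sqrtr0 (dphi0 phiH) mulr0 addr0.
have [tm m1] := andP (trunc_m_small dm1 dp1 t01).
rewrite /dphi_trunc (negbTE t_neq0); apply: mul_div_le_sqrt => //.
- exact: dphi_le phiH.
- by rewrite (dphi0 phiH).
- by rewrite lt_def t_neq0.
Qed.

Lemma dphi_trunc_cvg0 (x0 : R * \bar R * R) : x0.2 = 0 ->
  dphi_trunc dphi x.1.1 x.1.2 x.2
    @[x --> within [set x | param_dom x.1 /\ 0 <= x.2] (nbhs x0)] --> 0.
Proof.
set D := [set x | _] => t0_eq0.
have sqrt_cvg : {for x0, continuous (fun x => Num.sqrt x.2)}.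
  by apply: continuous_comp; [exact: cvg_snd | exact: sqrt_continuous].
apply: (squeeze_cvgr (f := fun=> 0)
  (h := fun x => dphi (Num.sqrt x.2) + dphi 1 * Num.sqrt x.2)); last first.
- have -> : 0 = 0 + dphi 1 * Num.sqrt x0.2 by rewrite t0_eq0 sqrtr0 mulr0 addr0.
  apply: cvgD; last exact: cvgM (cvg_cst _) (cvg_within_filter _ sqrt_cvg).
  apply: (dphi_cvg0 phiH sqrt_cvg); first by rewrite t0_eq0 sqrtr0.
  by move=> x _; exact: sqrtr_ge0.
- exact: cvg_cst.
have t_small : \forall x \near within D (nbhs x0), x.2 < 1.
  apply: (cvgr_lt _ (cvg_within_filter _ cvg_snd)).
  by rewrite t0_eq0 ltr01.
apply: filterS2 (withinT D _) t_small => -[[dm dp] t] /=.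
move=> [[/andP[dm0 dm1] dp1] t0] t1.
rewrite dphi_trunc_le_sqrt ?dm0 ?t0 ?(ltW t1) // andbT.
exact: dphi_trunc_ge0 dm0 (lt_le_trans lte01 dp1) t0.
Qed.

Lemma dphi_trunc_continuous :
  {within [set x : R * \bar R * R | param_dom x.1 /\ 0 <= x.2],
    continuous (fun x => dphi_trunc dphi x.1.1 x.1.2 x.2)}.
Proof.
set D := [set x | _]; apply/subspace_continuousP => x0 [[/andP[dm0 _] dp1] t0_ge0].
rewrite /from_subspace /=; have [t0_eq0|t0_neq0] := eqVneq x0.2 0.
  by rewrite {2}/dphi_trunc t0_eq0 eqxx; exact: dphi_trunc_cvg0.
have t_cvg : x.2 @[x --> within D (nbhs x0)] --> x0.2 by exact: cvg_within_filter cvg_snd.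
have t0_gt0 : 0 < x0.2 by rewrite lt_def t0_neq0.
have m0_gt0 := trunc_m_gt0 dm0 (lt_le_trans lte01 dp1) t0_gt0.
have m_cvg : trunc_m x.1.1 x.1.2 x.2 @[x --> within D (nbhs x0)]
    --> trunc_m x0.1.1 x0.1.2 x0.2.
  have dp_neqNy (dp : \bar R) : (1 <= dp)%E -> dp != -oo%E.
    by move=> dp_ge1; rewrite gt_eqF // (lt_le_trans (ltNyr 1)).
  have := (subspace_continuousP _ _).1 trunc_m_continuous x0 (dp_neqNy _ dp1).
  by apply: cvg_trans; apply: cvg_app; apply: within_subset => x [[_ /dp_neqNy]].
have truncE : {near within D (nbhs x0),
    (fun x => dphi (trunc_m x.1.1 x.1.2 x.2) / trunc_m x.1.1 x.1.2 x.2 * x.2) =1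
    (fun x => dphi_trunc dphi x.1.1 x.1.2 x.2)}.
  apply: filterS (cvgr_gt _ t_cvg _ t0_gt0) => x /lt0r_neq0 /negbTE.
  by rewrite /dphi_trunc => ->.
apply: cvg_trans (near_eq_cvg truncE) _; rewrite /dphi_trunc (negbTE t0_neq0).
have dphi_m_cvg := cvg_comp _ _ m_cvg (dphi_continuous_at phiH m0_gt0).
exact: cvgM (cvgM dphi_m_cvg (cvgV (lt0r_neq0 m0_gt0) m_cvg)) t_cvg.
Qed.

Lemma dphi_trunc_incr_homeo_family :
  incr_homeo_family (@param_dom R) (fun d t => dphi_trunc dphi d.1 d.2 t).
Proof.
split=> [|d _|[dm dp] [/andP[dm0 _] dp1]|[dm dp] [/andP[_ dm1] dp1]] /=.
- exact: dphi_trunc_continuous.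
- by rewrite /dphi_trunc eqxx.
- by move=> s t; apply: dphi_trunc_lt; rewrite // (lt_le_trans lte01).
- exact: dphi_trunc_unbounded.
Qed.

End TruncatedDerivative.

Theorem lemmaA9 (R : realType) (n : nat) (phi dphi : R -> R) :
  unif_convex_Nfunction phi dphi ->
  [/\ {within [set x : R * \bar R * R | param_dom x.1 /\ 0 <= x.2],
        continuous (fun x => dphi_trunc dphi x.1.1 x.1.2 x.2)},
      {within [set x : R * \bar R * 'M[R]_n | param_dom x.1],
        continuous (fun x => A_trunc dphi x.1.1 x.1.2 x.2)},
      (exists Ainv : R * \bar R -> 'M[R]_n -> 'M[R]_n,
        (forall d, param_dom d ->
           cancel (A_trunc dphi d.1 d.2) (Ainv d) /\
           cancel (Ainv d) (A_trunc dphi d.1 d.2)) /\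
        {within [set x : R * \bar R * 'M[R]_n | param_dom x.1],
          continuous (fun x => Ainv x.1 x.2)}),
      {within [set x : R * \bar R * 'M[R]_n | param_dom x.1],
        continuous (fun x => V_trunc dphi x.1.1 x.1.2 x.2)}
    & (exists Vinv : R * \bar R -> 'M[R]_n -> 'M[R]_n,
        (forall d, param_dom d ->
           cancel (V_trunc dphi d.1 d.2) (Vinv d) /\
           cancel (Vinv d) (V_trunc dphi d.1 d.2)) /\
        {within [set x : R * \bar R * 'M[R]_n | param_dom x.1],
          continuous (fun x => Vinv x.1 x.2)})].
Proof.
move=> phiH; have dphi_truncH := dphi_trunc_incr_homeo_family phiH.
have [A_cont A_homeo] := radial_homeo dphi_truncH n.
have [V_cont V_homeo] := radial_homeo (sqrt_mul_incr_homeo_family dphi_truncH) n.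
split; [exact: dphi_trunc_continuous phiH | exact: A_cont | exact: A_homeo |
  exact: V_cont | exact: V_homeo].
Qed.
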